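(* Let $G=(V,E)$ be a simple connected graph with $N\ge 2$ nodes, and let $\tilde{L}_\tau$ denote either its Mellin transformed $d$-path Laplacian $\tilde{L}_{\mathrm{Mell}}=\sum_{d=1}^{d_{max}} d^{-s}L_d$ (with parameter $s>0$) or its Laplace transformed $d$-path Laplacian $\tilde{L}_{\mathrm{Lapl}}=L+\sum_{d=2}^{d_{max}} e^{-\lambda d}L_d$ (with parameter $\lambda>0$). Then $\lambda_2(\tilde{L}_\tau)/N\to\lambda_2(L)/N$ as $s\to\infty$ (respectively $\lambda\to\infty$), and $\lambda_2(\tilde{L}_\tau)/N\to 1$ as $s\to 0$ (respectively $\lambda\to 0$).
   Context: For a simple connected graph $G=(V,E)$ with $N$ nodes, $d_{ij}$ denotes the shortest-path distance between nodes $i$ and $j$ and $d_{max}$ the diameter. $L$ is the usual graph Laplacian ($L_{ii}=k_i$ the degree, $L_{ij}=-1$ if $(i,j)\in E$, $0$ otherwise). For $1\le d\le d_{max}$, the $d$-path Laplacian $L_d$ is the $N\times N$ matrix with $(L_d)_{ij}=-1$ if $i\neq j$ and $d_{ij}=d$, $(L_d)_{ij}=0$ if $i\ne j$ and $d_{ij}\neq d$, and $(L_d)_{ii}$ equal to the number of nodes $j$ with $d_{ij}=d$; thus $L_1=L$. For such Laplacian-type matrices $M$, $0=\lambda_1(M)\le\lambda_2(M)\le\cdots\le\lambda_N(M)$ denote the eigenvalues in increasing order. *)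

From Stdlib Require Import ClassicalEpsilon.
From HB Require Import structures.
From mathcomp Require Import all_boot all_order all_algebra.
From mathcomp Require Import all_classical all_reals all_analysis.
Set Implicit Arguments. Unset Strict Implicit. Unset Printing Implicit Defensive.
Import Order.TTheory GRing.Theory Num.Theory.
Local Open Scope ring_scope.

Section Graph.
Variable N : nat.
Implicit Types (e : rel 'I_N) (i j : 'I_N).

Definition simple_graph e := symmetric e /\ irreflexive e.
Definition connected_graph e := forall i j, connect e i j.

Fixpoint ball e (k : nat) i : {set 'I_N} :=
  match k with
  | 0 => [set i]
  | k'.+1 => ball e k' i :|: [set y | [exists z in ball e k' i, e z y]]
  end.

(* shortest-path distance: least k with j in ball e k i (for a connected
   graph on N nodes this is always < N) *)
Definition gdist e i j : nat := find (fun k => j \in ball e k i) (iota 0 N).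

Definition dmax e : nat := \max_(i < N) \max_(j < N) gdist e i j.

Definition dLap (R : ringType) e (d : nat) : 'M[R]_N :=
  \matrix_(i, j) (if i == j then #|[set k | gdist e i k == d]|%:R
                  else if gdist e i j == d then -1 else 0).

Definition Lap (R : ringType) e : 'M[R]_N := dLap R e 1.

Definition LMell (R : realType) e (s : R) : 'M[R]_N :=
  \sum_(1 <= d < (dmax e).+1) ((d%:R : R) `^ (- s)) *: dLap R e d.

Definition LLapl (R : realType) e (lam : R) : 'M[R]_N :=
  Lap R e + \sum_(2 <= d < (dmax e).+1) expR (- lam * d%:R) *: dLap R e d.

(* eigenvalues (with multiplicity) in increasing order: the sorted sequence
   of the roots of the characteristic polynomial, when it splits over R
   (always the case for the real symmetric matrices considered here) *)
Definition eigs (R : realType) (M : 'M[R]_N) : seq R :=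
  epsilon (inhabits [::])
    (fun s : seq R => sorted <=%R s /\ char_poly M = \prod_(x <- s) ('X - x%:P)).

Definition eigval (R : realType) (M : 'M[R]_N) (k : nat) : R :=
  nth 0 (eigs M) k.-1.

End Graph.

From Pilot Require Import Defs.
From HB Require Import structures.
From mathcomp Require Import all_boot all_order all_algebra.
From mathcomp Require Import all_classical all_reals all_analysis.
From mathcomp Require Import ring lra complex.
From Stdlib Require Import ClassicalEpsilon.
Import Order.TTheory GRing.Theory Num.Theory.
Import numFieldNormedType.Exports.
Local Open Scope ring_scope.
Local Open Scope classical_set_scope.

(* All the matrices involved are nonnegative combinations of the d-path
   Laplacians, hence symmetric, positive semidefinite and with the all-ones
   vector in their kernel: their spectrum is 0 followed by the N - 1 nonnegative
   roots of char_poly M / 'X, and lambda_2 is the smallest of these.  As s or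
   lambda tends to +oo the weights tend to those of L itself, and as they tend
   to 0 all weights tend to 1, giving sum_d L_d = N I - J, whose nonzero
   eigenvalue N has multiplicity N - 1.  Entrywise convergence of the matrices
   gives coefficientwise convergence of char_poly M / 'X, and the smallest root
   of a monic real-rooted polynomial with nonnegative roots depends continuously
   on its coefficients. *)

Lemma char_poly_conj (F : fieldType) n (P A : 'M[F]_n) : P \in unitmx ->
  char_poly (invmx P *m A *m P) = char_poly A.
Proof.
move=> Pu; rewrite /char_poly /char_poly_mx.
set Q' := map_mx polyC (invmx P); set P' := map_mx polyC P.
have QP : Q' *m P' = 1%:M by rewrite -map_mxM mulVmx // map_mx1.
have PQ : P' *m Q' = 1%:M by rewrite -map_mxM mulmxV // map_mx1.
have -> : 'X%:M - map_mx polyC (invmx P *m A *m P) =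
    Q' *m ('X%:M - map_mx polyC A) *m P'.
  rewrite !map_mxM mulmxBr mulmxBl -/Q' -/P' mul_mx_scalar -scalemxAl QP.
  by rewrite scalemx1.
by rewrite !det_mulmx mulrC mulrA -det_mulmx PQ det1 mul1r.
Qed.

Lemma char_poly_sym_split (R : realType) n (A : 'M[R]_n) : A^T = A ->
  exists s : seq R, sorted <=%R s /\ char_poly A = \prod_(x <- s) ('X - x%:P).
Proof.
move=> Asym; pose B := map_mx (real_complex R) A.
have Bh : B \is hermsymmx.
  apply: realsym_hermsym.
    by apply/is_hermitianmxP; rewrite expr0 scale1r map_mx_id // /B map_trmx Asym.
  by apply/mxOverP => i j; rewrite mxE; apply/complex_realP; exists (A i j).
have /orthomx_spectralP BE := hermitian_normalmx Bh.
have /mxOverP dreal := hermitian_spectral_diag_real Bh.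
move: BE dreal; set P := spectralmx B; set d := spectral_diag B => BE dreal.
pose r i := complex.Re (d 0 i).
have dE i : d 0 i = real_complex R (r i).
  by rewrite /r; have /complex_realP [k ->] := dreal 0 i.
have cB : char_poly B = \prod_(i < n) ('X - (d 0 i)%:P).
  rewrite BE char_poly_conj ?spectral_unit // char_poly_trig ?diag_mx_is_trig //.
  by apply: eq_bigr => i _; rewrite mxE eqxx mulr1n.
exists (sort <=%R [seq r i | i <- enum 'I_n]).
split; first by apply: sort_sorted; exact: le_total.
apply: (@map_poly_inj _ _ (real_complex R)).
rewrite map_char_poly -/B cB rmorph_prod.
rewrite (perm_big _ (permEl (perm_sort _ _))) big_map big_enum /=.
by apply: eq_bigr => i _; rewrite map_polyXsubC dE.
Qed.

Lemma eigsP {R : realType} {N} (M : 'M[R]_N) : M^T = M ->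
  sorted <=%R (eigs M) /\ char_poly M = \prod_(x <- eigs M) ('X - x%:P).
Proof. by move=> /char_poly_sym_split; apply: epsilon_spec. Qed.

Lemma mxtrace_eigs {R : realType} {N} (M : 'M[R]_N) : (0 < N)%N -> M^T = M ->
  \tr M = \sum_(x <- eigs M) x.
Proof.
move=> N_gt0 /eigsP [_ cM].
have szN : size (eigs M) = N.
  by have := size_char_poly M; rewrite cM size_prod_XsubC => -[].
apply: oppr_inj; rewrite -char_poly_trace // cM -[in X in _`_X]szN.
by rewrite coefPn_prod_XsubC // szN -lt0n.
Qed.

Section FilteredSums.
Context {T : Type} {F : set_system T} {FF : Filter F} {R : realType}.

Lemma cvg_sum (I : Type) (r : seq I) (P : pred I) (f : I -> T -> R) (l : I -> R) :
  (forall i, P i -> f i t @[t --> F] --> l i) ->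
  \sum_(i <- r | P i) f i t @[t --> F] --> \sum_(i <- r | P i) l i.
Proof. by apply: cvg_big => //; exact: add_continuous. Qed.

Definition poly_cvg (p : T -> {poly R}) (p0 : {poly R}) :=
  forall k, (p t)`_k @[t --> F] --> p0`_k.

Lemma poly_cvg_cst p0 : poly_cvg (fun=> p0) p0.
Proof. by move=> k; exact: cvg_cst. Qed.

Lemma poly_cvgD p q p0 q0 : poly_cvg p p0 -> poly_cvg q q0 ->
  poly_cvg (fun t => p t + q t) (p0 + q0).
Proof.
by move=> Hp Hq k; under eq_fun do rewrite coefD; rewrite coefD; apply: cvgD.
Qed.

Lemma poly_cvgN p p0 : poly_cvg p p0 -> poly_cvg (fun t => - p t) (- p0).
Proof. by move=> Hp k; under eq_fun do rewrite coefN; rewrite coefN; apply: cvgN. Qed.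

Lemma poly_cvgM p q p0 q0 : poly_cvg p p0 -> poly_cvg q q0 ->
  poly_cvg (fun t => p t * q t) (p0 * q0).
Proof.
move=> Hp Hq k; under eq_fun do rewrite coefM.
by rewrite coefM; apply: cvg_sum => j _; apply: cvgM.
Qed.

Lemma poly_cvgC (c : T -> R) (c0 : R) : c t @[t --> F] --> c0 ->
  poly_cvg (fun t => (c t)%:P) c0%:P.
Proof.
move=> Hc [|k]; under eq_fun do rewrite coefC /=; rewrite coefC //.
exact: cvg_cst.
Qed.

Lemma poly_cvg_mulXK p p0 : poly_cvg (fun t => 'X * p t) ('X * p0) -> poly_cvg p p0.
Proof.
by move=> HX k; have := HX k.+1; rewrite coefXM; under eq_fun do rewrite coefXM.
Qed.

Lemma poly_cvg_sum (I : Type) (r : seq I) (f : I -> T -> {poly R}) l :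
  (forall i, poly_cvg (f i) (l i)) ->
  poly_cvg (fun t => \sum_(i <- r) f i t) (\sum_(i <- r) l i).
Proof.
move=> Hf k; under eq_fun do rewrite coef_sum.
by rewrite coef_sum; apply: cvg_sum => i _; apply: Hf.
Qed.

Lemma poly_cvg_prod (I : Type) (r : seq I) (f : I -> T -> {poly R}) l :
  (forall i, poly_cvg (f i) (l i)) ->
  poly_cvg (fun t => \prod_(i <- r) f i t) (\prod_(i <- r) l i).
Proof.
move=> Hf; elim: r => [|i r IHr].
  by under eq_fun do rewrite big_nil; rewrite big_nil; exact: poly_cvg_cst.
by under eq_fun do rewrite big_cons; rewrite big_cons; apply: poly_cvgM.
Qed.

Lemma poly_cvg_char_poly n (M : T -> 'M[R]_n) (M0 : 'M[R]_n) :
  (forall i j, M t i j @[t --> F] --> M0 i j) ->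
  poly_cvg (fun t => char_poly (M t)) (char_poly M0).
Proof.
move=> HM; apply: poly_cvg_sum => s.
apply: poly_cvgM; first exact: poly_cvg_cst.
apply: poly_cvg_prod => i; rewrite !mxE.
under [fun t => _]eq_fun do rewrite !mxE.
apply: poly_cvgD; first exact: poly_cvg_cst.
by apply: poly_cvgN; apply: poly_cvgC.
Qed.

End FilteredSums.

Section SmallestRoot.
Context {R : realType}.

Lemma head_sorted_le (s : seq R) x : sorted <=%R s -> x \in s -> head 0 s <= x.
Proof.
case: s => [|a s] //= /(order_path_min le_trans) /allP le_a.
by rewrite inE => /predU1P [->|/le_a].
Qed.

Lemma head_mem (s : seq R) : (0 < size s)%N -> head 0 s \in s.
Proof. by case: s => //= a s _; rewrite mem_head. Qed.

Lemma norm_prod_sub_ge (s : seq R) x eps : 0 <= eps ->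
  (forall y, y \in s -> eps <= `|x - y|) ->
  eps ^+ size s <= `|\prod_(y <- s) (x - y)|.
Proof.
move=> eps0; elim: s => [|a s IHs] Hs; first by rewrite big_nil normr1.
rewrite big_cons normrM exprS ler_pM ?exprn_ge0 ?Hs ?mem_head // IHs // => y ys.
by rewrite Hs // inE ys orbT.
Qed.

Lemma norm_horner_sub_le (p q : {poly R}) m x B :
  (size p <= m)%N -> (size q <= m)%N -> `|x| <= B ->
  `|p.[x] - q.[x]| <= \sum_(k < m) `|p`_k - q`_k| * B ^+ k.
Proof.
move=> sp sq xB; rewrite (horner_coef_wide x sp) (horner_coef_wide x sq) -sumrB.
apply: le_trans (ler_norm_sum _ _ _) _; apply: ler_sum => k _.
rewrite -mulrBl normrM normrX ler_wpM2l // lerXn2r ?nnegrE //.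
exact: le_trans xB.
Qed.

Lemma cvg_smallest_root {T : Type} {F : set_system T} {PF : ProperFilter F}
    (r : T -> seq R) (r0 : seq R) :
  (0 < size r0)%N -> (forall t, size (r t) = size r0) ->
  (forall t, sorted <=%R (r t)) -> (forall t, all (>= 0) (r t)) ->
  sorted <=%R r0 ->
  poly_cvg (F := F) (fun t => \prod_(x <- r t) ('X - x%:P))
    (\prod_(x <- r0) ('X - x%:P)) ->
  head 0 (r t) @[t --> F] --> head 0 r0.
Proof.
move=> r0_gt0 size_r sorted_r r_ge0 sorted_r0 Hcvg.
set n := size r0; set mu := head 0 r0; set B := 1 + `|mu|.
set q := fun t => \prod_(x <- r t) ('X - x%:P).
set q0 := \prod_(x <- r0) ('X - x%:P).
pose D t := \sum_(k < n.+1) `|(q t)`_k - q0`_k| * B ^+ k.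
have D_cvg0 : D t @[t --> F] --> 0.
  rewrite [0](_ : _ = \sum_(k < n.+1) `|q0`_k - q0`_k| * B ^+ k); last first.
    by rewrite big1 // => k _; rewrite subrr normr0 mul0r.
  apply: cvg_sum => k _; apply: cvgMr_tmp.
  by apply: cvg_norm; apply: cvgB; [exact: Hcvg | exact: cvg_cst].
have horner_near t x : `|x| <= B -> `|(q t).[x] - q0.[x]| <= D t.
  by apply: norm_horner_sub_le; rewrite size_prod_XsubC ?size_r.
have mu_r0 : mu \in r0 by exact: head_mem.
apply/cvgrPdist_lt => eps eps_gt0.
move/cvgrPdist_lt: D_cvg0 => /(_ (eps ^+ n) (exprn_gt0 _ eps_gt0)).
apply: filterS => t; rewrite sub0r normrN => /(le_lt_trans (ler_norm _)) Dt.
set h := head 0 (r t).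
have h_r : h \in r t by apply: head_mem; rewrite size_r.
have h_ge0 : 0 <= h by move/allP: (r_ge0 t) => /(_ h h_r).
(* At a point eps-far from all roots of one polynomial, that polynomial is at
   least eps^n in absolute value, while it is within D t < eps^n of the other
   one, which must therefore not vanish there. *)
rewrite ltr_distlC; apply/andP; split; rewrite ltNge; apply/negP => far.
- have : `|(q t).[h] - q0.[h]| <= D t.
    by apply: horner_near; rewrite ger0_norm // /B; have := ler_norm mu; lra.
  rewrite (rootP _) ?root_prod_XsubC // sub0r normrN horner_prod.
  under eq_bigr do rewrite hornerXsubC.
  apply/negP; rewrite -ltNge; apply: (lt_le_trans Dt).
  apply: norm_prod_sub_ge; first exact: ltW.
  move=> y /(head_sorted_le _ _ sorted_r0); rewrite -/mu => mu_y.
  by rewrite distrC ger0_norm; lra.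
- have : `|(q t).[mu] - q0.[mu]| <= D t by apply: horner_near; rewrite /B; lra.
  rewrite [q0.[mu]](rootP _) ?root_prod_XsubC // subr0 horner_prod.
  under eq_bigr do rewrite hornerXsubC.
  apply/negP; rewrite -ltNge; apply: (lt_le_trans Dt).
  rewrite /n -(size_r t); apply: norm_prod_sub_ge; first exact: ltW.
  move=> y /(head_sorted_le _ _ (sorted_r t)); rewrite -/h => h_y.
  by rewrite distrC ger0_norm; lra.
Qed.

End SmallestRoot.

Section LaplacianLike.
Context {R : realType} {N : nat}.
Implicit Types (M : 'M[R]_N) (v : 'rV[R]_N).

Definition laplacian_like M :=
  [/\ M^T = M, M *m (const_mx 1 : 'cV_N) = 0 & forall v, 0 <= (v *m M *m v^T) 0 0].

Lemma laplacian_like_sum (I : Type) (r : seq I) (P : pred I) (c : I -> R)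
    (A : I -> 'M[R]_N) :
  (forall i, P i -> 0 <= c i /\ laplacian_like (A i)) ->
  laplacian_like (\sum_(i <- r | P i) c i *: A i).
Proof.
move=> HA; apply: (big_ind laplacian_like).
- by split=> [| |v]; rewrite ?trmx0 ?mulmx0 ?mul0mx ?mxE.
- move=> A1 A2 [A1s A1r A1p] [A2s A2r A2p]; split=> [| |v].
  + by rewrite raddfD /= A1s A2s.
  + by rewrite mulmxDl A1r A2r addr0.
  + by rewrite mulmxDr mulmxDl mxE addr_ge0.
- move=> i /HA [c_ge0 [As Ar Ap]]; split=> [| |v].
  + by rewrite linearZ /= As.
  + by rewrite -scalemxAl Ar scaler0.
  + by rewrite -scalemxAr -scalemxAl mxE mulr_ge0.
Qed.

Lemma sum_delta (i : 'I_N) (a : 'I_N -> R) : \sum_j (i == j)%:R * a j = a i.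
Proof.
rewrite (bigD1 i) //= eqxx mul1r big1 ?addr0 // => j ji.
by rewrite eq_sym (negbTE ji) mul0r.
Qed.

Definition weightedLap (w : 'I_N -> 'I_N -> R) : 'M[R]_N :=
  \matrix_(i, j) ((i == j)%:R * \sum_k w i k - w i j).

Lemma laplacian_like_weightedLap w :
  (forall i j, w i j = w j i) -> (forall i j, 0 <= w i j) ->
  laplacian_like (weightedLap w).
Proof.
move=> w_sym w_ge0; rewrite /weightedLap; split.
- apply/matrixP => i j; rewrite !mxE eq_sym w_sym.
  by case: eqP => [->|]; rewrite ?mul0r.
- apply/matrixP => i j; rewrite !mxE.
  under eq_bigr do rewrite !mxE mulr1.
  by rewrite sumrB sum_delta subrr.
move=> v; pose x i := v 0 i; set M := \matrix_(i, j) _.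
have -> : (v *m M *m v^T) 0 0 = \sum_i \sum_j x i * M i j * x j.
  rewrite mxE exchange_big /=; apply: eq_bigr => j _.
  by rewrite !mxE big_distrl.
have -> : \sum_i \sum_j x i * M i j * x j =
    \sum_i \sum_j w i j * (x i ^+ 2 - x i * x j).
  apply: eq_bigr => i _; under eq_bigr do rewrite mxE.
  rewrite (eq_bigr (fun j => (i == j)%:R * (x i * (\sum_k w i k) * x j)
                              - x i * w i j * x j)); last by move=> j _; ring.
  rewrite sumrB sum_delta mulr_sumr big_distrl -sumrB /=.
  by apply: eq_bigr => j _; ring.
(* Symmetrising in i, j turns the form into half the sum of w i j (x i - x j)^2. *)
have sym : \sum_i \sum_j w i j * (x i ^+ 2 - x i * x j) =
    \sum_i \sum_j w i j * (x j ^+ 2 - x j * x i).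
  by rewrite exchange_big /=; apply: eq_bigr => i _; apply: eq_bigr => j _; rewrite w_sym.
suff : 0 <= (\sum_i \sum_j w i j * (x i ^+ 2 - x i * x j)) *+ 2.
  by rewrite pmulrn_lge0.
rewrite mulr2n [X in _ + X]sym -big_split /=; apply: sumr_ge0 => i _.
rewrite -big_split /=; apply: sumr_ge0 => j _.
rewrite -mulrDr mulr_ge0 //; have := sqr_ge0 (x i - x j); nra.
Qed.

Lemma laplacian_like_eig_ge0 M x : laplacian_like M -> x \in eigs M -> 0 <= x.
Proof.
case=> Ms _ Mpsd x_eig; have [_ cM] := eigsP _ Ms.
have : eigenvalue M x by rewrite eigenvalue_root_char cM root_prod_XsubC.
case/eigenvalueP => v vM v_neq0.
have [i vi_neq0] : exists i, v 0 i != 0.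
  apply/existsP; rewrite -negb_forall; apply: contra v_neq0 => /forallP v0.
  by apply/eqP/rowP => i; rewrite mxE; apply/eqP.
have vv_gt0 : 0 < (v *m v^T) 0 0.
  rewrite mxE (bigD1 i) //= mxE -expr2 ltr_pwDl ?exprn_even_gt0 //.
  by apply: sumr_ge0 => j _; rewrite mxE -expr2 sqr_ge0.
by have := Mpsd v; rewrite vM -scalemxAl mxE pmulr_lge0.
Qed.

Lemma laplacian_like_eig0 M : (0 < N)%N -> laplacian_like M -> 0 \in eigs M.
Proof.
move=> N_gt0 [Ms M1 _]; have [_ cM] := eigsP _ Ms.
rewrite -root_prod_XsubC -cM -eigenvalue_root_char.
apply/eigenvalueP; exists (const_mx 1)^T.
  by rewrite -{1}Ms -trmx_mul M1 trmx0 scale0r.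
apply/eqP => /rowP /(_ (Ordinal N_gt0)); rewrite !mxE => /eqP.
by rewrite oner_eq0.
Qed.

Lemma laplacian_like_eigs M : (0 < N)%N -> laplacian_like M ->
  let r := behead (eigs M) in
  [/\ eigs M = 0 :: r, sorted <=%R r, all (>= 0) r, size r = N.-1
    & char_poly M = 'X * \prod_(x <- r) ('X - x%:P)].
Proof.
move=> N_gt0 LM r; have [Ms _ _] := LM; have [sorted_eigs cM] := eigsP _ Ms.
have eig_ge0 x : x \in eigs M -> 0 <= x := laplacian_like_eig_ge0 _ _ LM.
have := laplacian_like_eig0 _ N_gt0 LM.
have := size_char_poly M; rewrite cM size_prod_XsubC.
move: sorted_eigs cM eig_ge0; rewrite /r; case: (eigs M) => [|a s] //= sorted_as cM.
move=> as_ge0 [size_s] /(head_sorted_le _ _ (sorted_as : sorted _ (a :: s))) a_le0.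
have a0 : a = 0 by apply/le_anti; rewrite a_le0 as_ge0 ?mem_head.
rewrite a0 in cM *; split => //.
- exact: path_sorted sorted_as.
- by apply/allP => y ys; rewrite as_ge0 // inE ys orbT.
- by rewrite -size_s.
- by rewrite big_cons subr0.
Qed.

End LaplacianLike.

Lemma eigval2_cvg {R : realType} {N : nat} {T : Type} {F : set_system T}
    {PF : ProperFilter F} (M : T -> 'M[R]_N) (M0 : 'M[R]_N) :
  (1 < N)%N -> (forall t, laplacian_like (M t)) -> laplacian_like M0 ->
  (forall i j, M t i j @[t --> F] --> M0 i j) ->
  eigval (M t) 2 @[t --> F] --> eigval M0 2.
Proof.
move=> N_gt1 LM LM0 M_cvg; have N_gt0 := ltnW N_gt1.
have [eigs0 sorted0 _ size0 char0] := laplacian_like_eigs _ N_gt0 LM0.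
rewrite /eigval eigs0 /= nth0.
under eq_fun => t do have [-> _ _ _ _] := laplacian_like_eigs _ N_gt0 (LM t).
under eq_fun do rewrite /= nth0.
apply: cvg_smallest_root => // [|t|t|t|].
- by rewrite size0 -ltnS prednK.
- by have [_ _ _ -> _] := laplacian_like_eigs _ N_gt0 (LM t).
- by have [_ ? _ _ _] := laplacian_like_eigs _ N_gt0 (LM t).
- by have [_ _ ? _ _] := laplacian_like_eigs _ N_gt0 (LM t).
apply: poly_cvg_mulXK; rewrite -char0.
under eq_fun => t do have [_ _ _ _ <-] := laplacian_like_eigs _ N_gt0 (LM t).
exact: poly_cvg_char_poly.
Qed.

Section GraphDistance.
Context {N : nat} (e : rel 'I_N).

Lemma ballP k i j : reflect
  (exists p : seq 'I_N, [/\ (size p <= k)%N, path e i p & last i p = j])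
  (j \in Defs.ball e k i).
Proof.
elim: k j => [|k IHk] j /=.
  rewrite inE; apply: (iffP eqP) => [->|[p [sp _ <-]]]; first by exists [::].
  by case: p sp.
rewrite !inE; apply: (iffP orP).
  case=> [/IHk [p [sp pp lp]]|/existsP [z /andP [/IHk [p [sp pp lp]] ezj]]].
    by exists p; split => //; apply: leqW.
  by exists (rcons p j); rewrite size_rcons rcons_path pp lp ezj last_rcons.
case=> p [sp pp lp]; have [sk|sk] := leqP (size p) k.
  by left; apply/IHk; exists p.
right; move: sp pp lp sk; case/lastP: p => [|p y] //.
rewrite size_rcons rcons_path last_rcons ltnS => sp /andP [pp ey] <- _.
by apply/existsP; exists (last i p); rewrite ey andbT; apply/IHk; exists p.
Qed.

Lemma ball_sym k i j : symmetric e ->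
  (j \in Defs.ball e k i) = (i \in Defs.ball e k j).
Proof.
move=> e_sym; wlog suff : i j / j \in Defs.ball e k i -> i \in Defs.ball e k j.
  by move=> H; apply/idP/idP; apply: H.
move=> /ballP [p [sp pp lp]]; apply/ballP; exists (rev (belast i p)); split.
- by rewrite size_rev size_belast.
- by rewrite -lp rev_path (eq_path (e' := e)) // => x y /=; rewrite e_sym.
- by rewrite -lp; case: p {sp pp lp} => //= a p; rewrite rev_cons last_rcons.
Qed.

Lemma gdist_sym i j : symmetric e -> gdist e i j = gdist e j i.
Proof. by move=> e_sym; apply: eq_find => k; rewrite ball_sym. Qed.

Lemma gdist_eq0 i j : (gdist e i j == 0)%N = (i == j).
Proof.
rewrite /gdist; have -> : iota 0 N = 0%N :: iota 1 N.-1 by case: (N) i {j} => [[]|].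
by rewrite /= inE [i == j]eq_sym; case: (j == i).
Qed.

Lemma gdist_le_dmax i j : (gdist e i j <= dmax e)%N.
Proof.
apply: leq_trans (leq_bigmax i).
exact: (leq_bigmax_cond (P := xpredT) (F := fun j => gdist e i j)).
Qed.

Lemma dmax_gt0 : (1 < N)%N -> (0 < dmax e)%N.
Proof.
move=> N_gt1; have N_gt0 := ltnW N_gt1.
apply: leq_trans (gdist_le_dmax (Ordinal N_gt0) (Ordinal N_gt1)).
by rewrite lt0n gdist_eq0.
Qed.

End GraphDistance.

Section CompleteGraph.
Context {R : realType} {N : nat}.

Definition completeLap : 'M[R]_N := \matrix_(i, j) ((i == j)%:R * N%:R - 1).

Lemma completeLap_weighted :
  completeLap = weightedLap (fun i k => (i != k)%:R).
Proof.
rewrite /weightedLap; apply/matrixP => i j; rewrite !mxE.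
have -> : \sum_k ((i != k)%:R : R) = \sum_k (1 - (i == k)%:R * 1).
  by apply: eq_bigr => k _; case: (i == k); rewrite ?mulr1 ?subrr ?subr0.
rewrite sumrB sum_delta sumr_const card_ord.
by case: eqP => _ /=; rewrite ?mul1r ?mul0r; lra.
Qed.

Lemma laplacian_like_completeLap : laplacian_like completeLap.
Proof.
by rewrite completeLap_weighted; apply: laplacian_like_weightedLap => [i j|i j];
  rewrite ?ler0n // eq_sym.
Qed.

(* completeLap = N I - J with J^2 = N J. *)
Lemma completeLap_sqr : completeLap *m completeLap = N%:R *: completeLap.
Proof.
apply/matrixP => i j; rewrite !mxE; under eq_bigr do rewrite !mxE.
rewrite (eq_bigr (fun k => (i == k)%:R * (((k == j)%:R * N%:R - 1) * N%:R)
                            - ((j == k)%:R * N%:R - 1))); last first.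
  by move=> k _; rewrite [j == k]eq_sym; ring.
rewrite sumrB sum_delta sumrB sum_delta sumr_const card_ord subrr subr0.
by rewrite mulrC.
Qed.

Lemma completeLap_eig x : x \in eigs completeLap -> x = 0 \/ x = N%:R.
Proof.
have [Ks _ _] := laplacian_like_completeLap; have [_ cK] := eigsP _ Ks.
rewrite -root_prod_XsubC -cK -eigenvalue_root_char => /eigenvalueP [v vK v_neq0].
have : v *m (completeLap *m completeLap) = (x ^+ 2) *: v.
  by rewrite mulmxA vK -scalemxAl vK scalerA expr2.
rewrite completeLap_sqr -scalemxAr vK scalerA => /eqP.
rewrite -subr_eq0 -scalerBl scaler_eq0 (negbTE v_neq0) orbF.
by rewrite expr2 -mulrBl mulf_eq0 subr_eq0 => /orP [/eqP|/eqP]; [right | left].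
Qed.

Lemma eigval2_completeLap : (1 < N)%N -> eigval completeLap 2 = N%:R.
Proof.
move=> N_gt1; have N_gt0 := ltnW N_gt1.
have [Ks _ _] := laplacian_like_completeLap.
have [eigsK _ _ sizeK _] := laplacian_like_eigs _ N_gt0 laplacian_like_completeLap.
rewrite /eigval eigsK /= nth0; set r := behead _ in eigsK sizeK *.
have r_le x : x \in r -> x <= N%:R.
  move=> xr; have : x \in eigs completeLap by rewrite eigsK inE xr orbT.
  by case/completeLap_eig => ->; rewrite ?ler0n.
(* The eigenvalues sum to the trace N (N - 1), so those in r, all <= N, equal N. *)
have sum_r : \sum_(x <- r) x = N%:R *+ size r.
  have := mxtrace_eigs _ N_gt0 Ks; rewrite eigsK big_cons add0r => <-.
  rewrite /mxtrace; under eq_bigr do rewrite mxE eqxx mul1r.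
  rewrite sumr_const card_ord sizeK; case: (N) N_gt0 => // n _ /=.
  by rewrite -[LHS]mulr_natr -[RHS]mulr_natr -natr1; ring.
have : \sum_(x <- r) (N%:R - x) == 0.
  by rewrite sumrB sum_r big_const_seq count_predT iter_addr_0 subrr.
rewrite big_seq psumr_eq0 => [/allP /(_ (head 0 r))|x /r_le]; last first.
  by rewrite subr_ge0.
have h_r : head 0 r \in r by rewrite head_mem // sizeK -ltnS prednK.
by rewrite subr_eq0 eq_sym h_r => /(_ isT) /eqP.
Qed.

End CompleteGraph.

Section PathLaplacians.
Context {R : realType} {N : nat} (e : rel 'I_N).
Hypothesis e_sym : symmetric e.

Definition pathLap (w : nat -> R) : 'M[R]_N :=
  \sum_(1 <= d < (dmax e).+1) w d *: dLap R e d.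

Lemma dLap_weighted d : d != 0%N ->
  dLap R e d = weightedLap (fun i k => (gdist e i k == d)%:R).
Proof.
move=> d_neq0; rewrite /weightedLap; apply/matrixP => i j.
rewrite !mxE -sum1_card natr_sum big_mkcond /=.
under eq_bigr do rewrite inE; case: eqP => [<-|_].
  have /eqP -> : gdist e i i == 0%N by rewrite gdist_eq0.
  rewrite eq_sym (negbTE d_neq0) mul1r subr0.
  by apply: eq_bigr => k _; case: (_ == d).
by rewrite mul0r sub0r; case: (_ == d); rewrite ?oppr0.
Qed.

Lemma laplacian_like_pathLap w : (forall d, 0 <= w d) -> laplacian_like (pathLap w).
Proof.
move=> w_ge0; rewrite /pathLap big_nat_cond.
apply: laplacian_like_sum => d /andP [/andP [d_gt0 _] _]; split => //.
rewrite dLap_weighted -?lt0n //; apply: laplacian_like_weightedLap => i j.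
  by rewrite gdist_sym.
exact: ler0n.
Qed.

Lemma pathLap_cvg {T : Type} {F : set_system T} {FF : Filter F}
    (w : T -> nat -> R) (c : nat -> R) :
  (forall d, (0 < d)%N -> w t d @[t --> F] --> c d) ->
  forall i j, pathLap (w t) i j @[t --> F] --> pathLap c i j.
Proof.
move=> w_cvg i j; rewrite /pathLap summxE big_nat_cond.
under eq_fun do rewrite summxE big_nat_cond.
apply: cvg_sum => d /andP [/andP [d_gt0 _] _].
under eq_fun do rewrite mxE.
by rewrite mxE; apply: cvgMr_tmp; apply: w_cvg.
Qed.

Lemma pathLap_delta1 : (0 < dmax e)%N -> pathLap (fun d => (d == 1)%:R) = Lap R e.
Proof.
move=> dmax_gt0; rewrite /pathLap big_ltn ?ltnS // eqxx scale1r big_nat_cond.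
by rewrite big1 ?addr0 // => d /andP [/andP [d_gt1 _] _]; rewrite gtn_eqF // scale0r.
Qed.

(* Every pair of distinct vertices is at exactly one distance d in [1, dmax]. *)
Lemma pathLap1 : pathLap (fun=> 1) = completeLap.
Proof.
have dist_ind i k :
    \sum_(1 <= d < (dmax e).+1) ((gdist e i k == d)%:R : R) = (i != k)%:R.
  rewrite (eq_bigr (fun d => if d == gdist e i k then 1 else 0)); last first.
    by move=> d _; rewrite eq_sym; case: eqP.
  rewrite -big_mkcond big_nat1_eq ltnS gdist_le_dmax andbT lt0n gdist_eq0.
  by case: (i == k).
rewrite completeLap_weighted /weightedLap /pathLap.
apply/matrixP => i j; rewrite summxE !mxE.
rewrite big_nat_cond (eq_bigr (fun d => (i == j)%:R * \sum_k (gdist e i k == d)%:R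
    - (gdist e i j == d)%:R)); last first.
  by move=> d /andP [/andP [d_gt0 _] _]; rewrite scale1r dLap_weighted -?lt0n // mxE.
rewrite -big_nat_cond sumrB -mulr_sumr exchange_big /= dist_ind.
by under eq_bigr do rewrite dist_ind.
Qed.

Lemma LLapl_pathLap lam : (0 < dmax e)%N ->
  LLapl e lam = pathLap (fun d => if d == 1%N then 1 else expR (- lam * d%:R)).
Proof.
move=> dmax_gt0; rewrite /pathLap big_ltn ?ltnS // eqxx scale1r big_nat_cond.
congr (_ + _); rewrite [LHS]big_nat_cond.
by apply: eq_bigr => d /andP [/andP [d_gt1 _] _]; rewrite gtn_eqF.
Qed.

Lemma eigval2_pathLap_cvg {T : Type} {F : set_system T} {PF : ProperFilter F}
    (w : T -> nat -> R) (c : nat -> R) :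
  (1 < N)%N -> (forall t d, 0 <= w t d) -> (forall d, 0 <= c d) ->
  (forall d, (0 < d)%N -> w t d @[t --> F] --> c d) ->
  eigval (pathLap (w t)) 2 @[t --> F] --> eigval (pathLap c) 2.
Proof.
move=> N_gt1 w_ge0 c_ge0 w_cvg; apply: eigval2_cvg => // [t||].
- exact: laplacian_like_pathLap.
- exact: laplacian_like_pathLap.
- exact: pathLap_cvg.
Qed.

End PathLaplacians.

Section Weights.
Context {R : realType}.

Lemma cvg_expR_scaleN_pinfty (a : R) : 0 < a ->
  expR (- t * a) @[t --> +oo] --> (0 : R).
Proof.
move=> a_gt0; have ta_cvg : t * a @[t --> +oo] --> +oo.
  by apply: gt0_cvgMly => //; exact: cvg_id.
apply: cvg_trans (cvg_comp _ _ ta_cvg (@cvgr_expR R)).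
by apply: near_eq_cvg; near=> t => /=; rewrite mulNr.
Unshelve. all: end_near.
Qed.

Lemma cvg_expR_scaleN_0 (a : R) : expR (- t * a) @[t --> 0^'+] --> (1 : R).
Proof.
have : - t * a @[t --> 0] --> - 0 * a.
  by apply: cvgMr_tmp; apply: cvgN; exact: cvg_id.
rewrite oppr0 mul0r => /(continuous_cvg _ (@continuous_expR R 0)).
by rewrite expR0 => /cvg_at_right_filter.
Qed.

Lemma powRN_cvg_pinfty (d : nat) : (0 < d)%N ->
  d%:R `^ (- s) @[s --> +oo] --> ((d == 1)%N%:R : R).
Proof.
move=> d_gt0; have [->|d_neq1] := eqVneq d 1%N.
  by under eq_fun do rewrite powR1; exact: cvg_cst.
under eq_fun do rewrite /powR pnatr_eq0 (gtn_eqF d_gt0).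
by apply: cvg_expR_scaleN_pinfty; rewrite ln_gt0 // ltr1n ltn_neqAle eq_sym d_neq1.
Qed.

Lemma powRN_cvg_0 (d : nat) : (0 < d)%N -> d%:R `^ (- s) @[s --> 0^'+] --> (1 : R).
Proof.
move=> d_gt0; under eq_fun do rewrite /powR pnatr_eq0 (gtn_eqF d_gt0).
exact: cvg_expR_scaleN_0.
Qed.

End Weights.

Theorem lemma2 (R : realType) (N : nat) (e : rel 'I_N) :
  (2 <= N)%N -> simple_graph e -> connected_graph e ->
  [/\ eigval (LMell e s) 2 / N%:R @[s --> +oo] --> eigval (Lap R e) 2 / N%:R,
      eigval (LMell e s) 2 / N%:R @[s --> 0^'+] --> (1 : R),
      eigval (LLapl e lam) 2 / N%:R @[lam --> +oo] --> eigval (Lap R e) 2 / N%:R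
    & eigval (LLapl e lam) 2 / N%:R @[lam --> 0^'+] --> (1 : R)].
Proof.
move=> N_gt1 [e_sym _] _; have dmax_gt0 := dmax_gt0 e N_gt1.
have lim1 : eigval (pathLap e (fun=> 1)) 2 / N%:R = 1 :> R.
  by rewrite pathLap1 eigval2_completeLap // divff // pnatr_eq0 -lt0n ltnW.
rewrite -(pathLap_delta1 e) //.
split; rewrite -?[X in _ --> X]lim1; apply: cvgMr_tmp.
- by apply: eigval2_pathLap_cvg => //; exact: powRN_cvg_pinfty.
- by apply: eigval2_pathLap_cvg => //; exact: powRN_cvg_0.
- under eq_cvg do rewrite LLapl_pathLap //.
  apply: eigval2_pathLap_cvg => // [t d|d d_gt0].
    by case: ifP; rewrite ?expR_ge0.
  case: eqP => _; first exact: cvg_cst.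
  by apply: cvg_expR_scaleN_pinfty; rewrite ltr0n.
- under eq_cvg do rewrite LLapl_pathLap //.
  apply: eigval2_pathLap_cvg => // [t d|d d_gt0].
    by case: ifP; rewrite ?expR_ge0.
  case: eqP => _; first exact: cvg_cst.
  exact: cvg_expR_scaleN_0.
Qed.
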